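(* For every monomial $\mathbf{y}^\alpha\in\mathbb{K}[\mathbf{y}]$, $\deg_{y_0}(\eta(\mathbf{y}^\alpha))=\deg(\mathbf{y}^\alpha)-\delta(\psi(\mathbf{y}^\alpha))$, where $\deg$ is the total degree and $\deg_{y_0}$ the degree in $y_0$.
   Context: Let $\mathbb{K}$ be a field of characteristic $0$, $M\subset\mathbb{R}^n$ a polytope with $0\in M$, $S_M\subset\mathbb{Z}^n$ the affine semigroup generated by $M\cap\mathbb{Z}^n$ and $S_M^h\subset\mathbb{Z}^{n+1}$ the one generated by $\{(s,1):s\in M\cap\mathbb{Z}^n\}$, both assumed pointed. $\mathbb{K}[S]$ is the semigroup algebra with monomials $X^s$, $X^sX^t=X^{s+t}$; $\mathbb{K}[S_M^h]$ is graded by $\deg X^{(s,d)}=d$. $\chi:\mathbb{K}[S_M^h]\to\mathbb{K}[S_M]$, $X^{(s,d)}\mapsto X^s$. The affine degree $\delta^A(X^s)$ is the least $d$ with $(s,d)\in S_M^h$; the sparse degree of a monomial $X^{(s,d)}$ is $\delta(X^{(s,d)})=\delta^A(X^s)$. Fix a monomial order $<_M$ on $\mathbb{K}[S_M]$. Let $a_0,\dots,a_m$ be the elements of $\{(s,1):s\in M\cap\mathbb{Z}^n\}$ with $a_0=(0,1)$; $\mathbb{K}[\mathbf{y}]=\mathbb{K}[y_0,\dots,y_m]$; $\psi:\mathbb{K}[\mathbf{y}]\to\mathbb{K}[S_M^h]$ the $\mathbb{K}$-algebra epimorphism $y_i\mapsto X^{a_i}$, with kernel the lattice ideal $T$. Fix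 a monomial order $\tilde<$ on $\mathbb{K}[\mathbf{y}]$ and define the monomial order $<_y$: $\mathbf{y}^a<_y\mathbf{y}^b$ iff $\deg\mathbf{y}^a<\deg\mathbf{y}^b$; or total degrees equal and $\deg_{y_0}\mathbf{y}^a>\deg_{y_0}\mathbf{y}^b$; or both equal and $\chi(\psi(\mathbf{y}^a))<_M\chi(\psi(\mathbf{y}^b))$; or all equal and $\mathbf{y}^a\,\tilde<\,\mathbf{y}^b$. For $g\in\mathbb{K}[\mathbf{y}]$, $\eta(g)$ denotes the normal form of $g$ with respect to $T$ and $<_y$ (for a monomial this normal form is a monomial). *)

From HB Require Import structures.
From mathcomp Require Import all_boot all_order all_algebra.
From mathcomp Require Import reals.
From mathcomp Require Import mpoly.
Set Implicit Arguments. Unset Strict Implicit. Unset Printing Implicit Defensive.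
Import Order.TTheory GRing.Theory Num.Theory.
Local Open Scope ring_scope.

Section Defs.

Definition in_conv (R : realType) (n : nat) (V : seq 'rV[R]_n) (x : 'rV[R]_n)
  : Prop :=
  exists lam : 'I_(size V) -> R,
    (forall i, 0 <= lam i) /\ \sum_i lam i = 1 /\
    x = \sum_i lam i *: V`_i.

Definition lat_to_real (R : realType) (n : nat) (s : 'rV[int]_n) : 'rV[R]_n :=
  map_mx (fun z : int => z%:~R) s.

Variables (n m : nat).
(* a i = s_i, where a_i = (s_i, 1), i = 0..m, enumerate the lattice points. *)
Variable a : 'I_m.+1 -> 'rV[int]_n.

Definition sexp (beta : 'X_{1..m.+1}) : 'rV[int]_n :=
  \sum_(i < m.+1) (a i *+ beta i).

(* Exponent of psi(y^beta) in S_M^h : (sum_i beta_i s_i, |beta|). *)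
Definition hexp (beta : 'X_{1..m.+1}) : 'rV[int]_n * nat :=
  (sexp beta, mdeg beta).

Definition in_SM (s : 'rV[int]_n) : Prop := exists beta, sexp beta = s.

Definition in_SMh (s : 'rV[int]_n) (d : nat) : Prop :=
  exists beta, sexp beta = s /\ mdeg beta = d.

Definition pointed_SM : Prop :=
  forall s, in_SM s -> in_SM (- s) -> s = 0.

Definition affine_degree (s : 'rV[int]_n) (d : nat) : Prop :=
  in_SMh s d /\ forall d', in_SMh s d' -> (d <= d')%N.

Definition monomial_order_SM (lt : rel 'rV[int]_n) : Prop :=
  [/\ forall s, in_SM s -> ~~ lt s s,
      forall s t u, in_SM s -> in_SM t -> in_SM u -> lt s t -> lt t u -> lt s u,
      forall s t, in_SM s -> in_SM t -> s != t -> lt s t || lt t s,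
      forall s t u, in_SM s -> in_SM t -> in_SM u -> lt s t -> lt (s + u) (t + u)
    & forall s, in_SM s -> s != 0 -> lt 0 s].

Definition monomial_order_y (lt : rel 'X_{1..m.+1}) : Prop :=
  [/\ forall s, ~~ lt s s,
      forall s t u, lt s t -> lt t u -> lt s u,
      forall s t, s != t -> lt s t || lt t s,
      forall s t u, lt s t -> lt (s + u)%MM (t + u)%MM
    & forall s, s != 0%MM -> lt 0%MM s].

Variables (ltM : rel 'rV[int]_n) (ltT : rel 'X_{1..m.+1}).

Definition lt_y (al be : 'X_{1..m.+1}) : bool :=
  (mdeg al < mdeg be)%N
  || ((mdeg al == mdeg be) && (be ord0 < al ord0)%N)
  || [&& mdeg al == mdeg be, al ord0 == be ord0 & ltM (sexp al) (sexp be)]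
  || [&& mdeg al == mdeg be, al ord0 == be ord0, sexp al == sexp be
       & ltT al be].

Variable K : fieldType.

(* f in T = ker psi : the image  psi(f) = sum_beta f_beta X^(hexp beta)
   has all coefficients zero in K[S_M^h]. *)
Definition in_T (f : {mpoly K[m.+1]}) : Prop :=
  forall u : 'rV[int]_n * nat,
    \sum_(beta <- msupp f | hexp beta == u) f@_beta = 0.

Definition lead_y (f : {mpoly K[m.+1]}) (beta : 'X_{1..m.+1}) : Prop :=
  beta \in msupp f /\ forall gam, gam \in msupp f -> gam != beta -> lt_y gam beta.

Definition in_initial_T (beta : 'X_{1..m.+1}) : Prop :=
  exists f gam, [/\ in_T f, f != 0, lead_y f gam & (gam <= beta)%MM].

Definition normal_form_mon (alpha beta : 'X_{1..m.+1}) : Prop :=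
  in_T ('X_[alpha] - 'X_[beta]) /\ ~ in_initial_T beta.

End Defs.

From HB Require Import structures.
From mathcomp Require Import all_boot all_order all_algebra.
From mathcomp Require Import reals.
From mathcomp Require Import mpoly.
From mathcomp Require Import zify.
Set Implicit Arguments. Unset Strict Implicit. Unset Printing Implicit Defensive.
Import Order.TTheory GRing.Theory Num.Theory.
Local Open Scope ring_scope.

(* Since a_0 = 0, the y_0-factors of a monomial do not move its image under
   chi o psi, so the fibre of psi(y^alpha) = X^(s,D) contains monomials of
   y_0-degree exactly D - delta and none of larger y_0-degree.  Within a fibre
   all degrees agree, so <_y prefers the larger y_0-degree; and the normal form
   is <_y-least in its fibre, since a smaller fibre element y^gamma would make
   y^beta the leading term of y^beta - y^gamma in T. *)

Lemma msuppXB {K : nzRingType} (k : nat) (x y : 'X_{1..k}) : x != y ->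
  perm_eq (msupp ('X_[x] - 'X_[y] : {mpoly K[k]})) [:: x; y].
Proof.
move=> xy; have msuppNX := msuppN ('X_[y] : {mpoly K[k]}).
rewrite msuppX in msuppNX.
rewrite (permPl (msuppD _)) msuppX ?perm_cons // => z /=.
rewrite (perm_mem msuppNX) !inE.
by apply/negP => /andP[/eqP-> /eqP yx]; rewrite yx eqxx in xy.
Qed.

Lemma mpolyXB_eq0 {K : nzRingType} (k : nat) (x y : 'X_{1..k}) :
  (('X_[x] - 'X_[y] : {mpoly K[k]}) == 0) = (x == y).
Proof.
apply/idP/eqP => [/eqP/(congr1 (mcoeff x))|->]; last by rewrite subrr.
rewrite mcoeffB mcoeff0 !mcoeffX eqxx; case: (y =P x) => [->//|_].
by rewrite subr0 => /eqP; rewrite oner_eq0.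
Qed.

Section FibresOfPsi.
Variables (n m : nat) (a : 'I_m.+1 -> 'rV[int]_n).

Lemma sexpD (x y : 'X_{1..m.+1}) : sexp a (x + y)%MM = sexp a x + sexp a y.
Proof. by rewrite /sexp -big_split; apply: eq_bigr => i _; rewrite mnmDE mulrnDr. Qed.

Lemma in_T_binomial {K : fieldType} (x y : 'X_{1..m.+1}) :
  in_T a ('X_[x] - 'X_[y] : {mpoly K[m.+1]}) <-> hexp a x = hexp a y.
Proof.
have [<-|xy] := eqVneq x y.
  by split=> // _ u; rewrite subrr msupp0 big_nil.
set p : {mpoly K[m.+1]} := 'X_[x] - 'X_[y].
have sumE u : \sum_(b <- msupp p | hexp a b == u) p@_b =
    (hexp a x == u)%:R - (hexp a y == u)%:R.
  rewrite (perm_big _ (msuppXB xy)) !big_cons big_nil !mcoeffB !mcoeffX.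
  rewrite !eqxx [y == x]eq_sym (negbTE xy) subr0 sub0r.
  by do 2!case: ifP => _; rewrite /= ?addr0 ?subr0 ?sub0r ?subrr ?oppr0.
rewrite /in_T; split=> [/(_ (hexp a x))|hxy u]; rewrite sumE.
  by rewrite eqxx; case: eqP => // _ /eqP; rewrite subr0 oner_eq0.
by rewrite hxy subrr.
Qed.

Variables (ltM : rel 'rV[int]_n) (ltT : rel 'X_{1..m.+1}).

Lemma lt_y_mdeg_y0 (x y : 'X_{1..m.+1}) :
  mdeg x = mdeg y -> (y ord0 < x ord0)%N -> lt_y a ltM ltT x y.
Proof. by rewrite /lt_y => -> ->; rewrite eqxx orbT. Qed.

Lemma in_initial_T_fibre {K : fieldType} (x y : 'X_{1..m.+1}) :
  hexp a y = hexp a x -> y != x -> lt_y a ltM ltT y x ->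
  in_initial_T a ltM ltT K x.
Proof.
move=> hyx yx lt_yx; have xy : x != y by rewrite eq_sym.
exists ('X_[x] - 'X_[y]), x; split.
- exact/in_T_binomial.
- by rewrite mpolyXB_eq0.
- split=> [|z]; rewrite (perm_mem (msuppXB xy)) ?mem_head //.
  by rewrite !inE => /orP[/eqP->|/eqP-> _]; rewrite ?eqxx.
- exact: lepm_refl.
Qed.

Hypothesis a0 : a ord0 = 0.

Lemma sexp_y0 (j : nat) : sexp a (U_(ord0) *+ j)%MM = 0.
Proof.
rewrite /sexp big1 // => i _; rewrite mulmnE mnm1E.
by case: eqP => [<-|_]; rewrite ?a0 ?mul0rn // mul0n mulr0n.
Qed.

Lemma mdeg_y0 (j : nat) : mdeg (U_(ord0 : 'I_m.+1) *+ j)%MM = j.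
Proof. by rewrite mdegMn mdeg1 mul1n. Qed.

Lemma strip_y0 (x : 'X_{1..m.+1}) :
  exists2 x', sexp a x' = sexp a x & mdeg x = (mdeg x' + x ord0)%N.
Proof.
set j := x ord0.
have lex : (U_(ord0) *+ j <= x)%MM.
  by apply/mnm_lepP => i; rewrite mulmnE mnm1E; case: eqP => [<-|]; rewrite ?mul1n.
have xE := submK lex; exists (x - U_(ord0) *+ j)%MM.
  by rewrite -{2}xE sexpD sexp_y0 addr0.
by rewrite -{1}xE mdegD mdeg_y0.
Qed.

Lemma pad_y0 (s : 'rV[int]_n) (d e : nat) : in_SMh a s d -> (d <= e)%N ->
  exists2 y, hexp a y = (s, e) & (e - d <= y ord0)%N.
Proof.
move=> [x [<- <-]] le_de; exists (x + U_(ord0) *+ (e - mdeg x))%MM.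
  by rewrite /hexp sexpD sexp_y0 addr0 mdegD mdeg_y0 subnKC.
by rewrite mnmDE mulmnE mnm1E eqxx mul1n leq_addl.
Qed.

End FibresOfPsi.

Theorem mainTheorem3
  (R : realType) (n m : nat) (V : seq 'rV[R]_n)
  (a : 'I_m.+1 -> 'rV[int]_n)
  (h0M : in_conv V 0)
  (ha_inj : injective a)
  (ha0 : a ord0 = 0)
  (haM : forall s : 'rV[int]_n, in_conv V (lat_to_real R s) <-> exists i, a i = s)
  (hpt : pointed_SM a)
  (K : fieldType) (hK : [pchar K] =i pred0)
  (ltM : rel 'rV[int]_n) (hM : monomial_order_SM a ltM)
  (ltT : rel 'X_{1..m.+1}) (hT : monomial_order_y ltT) :
  forall alpha beta : 'X_{1..m.+1},
    normal_form_mon a ltM ltT K alpha beta ->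
    forall d : nat, affine_degree a (sexp a alpha) d ->
      beta ord0 = (mdeg alpha - d)%N.
Proof.
move=> alpha beta [/in_T_binomial fibre_ab std_beta] d [SMh_d d_min].
have [sab dab] : sexp a alpha = sexp a beta /\ mdeg alpha = mdeg beta.
  by case: fibre_ab.
apply/eqP; rewrite eqn_leq; apply/andP; split.
- have [beta' s_beta' mdeg_beta] := strip_y0 ha0 beta.
  have : (d <= mdeg beta')%N by apply: d_min; exists beta'; rewrite sab.
  by rewrite dab mdeg_beta; lia.
- have le_d : (d <= mdeg alpha)%N by apply: d_min; exists alpha.
  have [y hy le_y0] := pad_y0 ha0 SMh_d le_d.
  rewrite leqNgt; apply/negP => lt_y0; apply: std_beta.
  have lt_beta_y : (beta ord0 < y ord0)%N by apply: leq_trans le_y0.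
  have fibre_y : hexp a y = hexp a beta by rewrite hy -fibre_ab.
  apply: (in_initial_T_fibre fibre_y).
  + by apply: contraTneq lt_beta_y => ->; rewrite ltnn.
  + exact: lt_y_mdeg_y0 (congr1 snd fibre_y) lt_beta_y.
Qed.
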